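(* For every integer $e\ge2$, the function $\Omega_e=\mathrm{Sh}_{1-2e^{-1}}(\Omega)$ is convex.
   Context: $\Omega(s)=\frac2\pi(s\arcsin\frac s2+\sqrt{4-s^2})$ for $|s|\le2$ and $\Omega(s)=|s|$ otherwise; $\Omega$ is $C^1$, even, equal to $|s|$ for $|s|\ge2$ and strictly convex on $[-2,2]$. For such a function $f$ (with $a=2$) and $\alpha\in[0,1)$: $F_\alpha(s)=f(s)-\alpha s$, $x_\alpha^+=(f')^{-1}(\alpha)\in[0,a)$ (inverse of $f':[-a,a]\to[-1,1]$); let $F_\alpha^{-1}$ be the inverse of $F_\alpha|_{[x_\alpha^+,\infty)}$, $\phi=F_\alpha^{-1}\circ F_\alpha$, $\delta_x=(1-\alpha)^{-1}F_\alpha(x)-\phi(x)$, $s_\alpha=x_\alpha^++\delta_{x_\alpha^+}$; $x\mapsto x+\delta_x$ is an increasing bijection $(-\infty,x_\alpha^+]\to(-\infty,s_\alpha]$ with inverse $\tau$. Define $\mathrm{Sh}_\alpha(f)(x)=\alpha x+F_\alpha(\tau(x))$ for $x\le s_\alpha$ and $=x$ for $x>s_\alpha$. *)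

From Stdlib Require Import Reals ClassicalEpsilon.
From Coquelicot Require Import Coquelicot.
Open Scope R_scope.

Definition Omega (s : R) : R :=
  if Rle_dec (Rabs s) 2
  then 2 / PI * (s * asin (s / 2) + sqrt (4 - s ^ 2))
  else Rabs s.

(* Generic inverse of g restricted to the domain D, chosen by Hilbert's
   epsilon: the (unique, when g is injective on D and y is in g(D)) x in D
   with g x = y. *)
Definition inv_on (D : R -> Prop) (g : R -> R) (y : R) : R :=
  epsilon (inhabits 0) (fun x => D x /\ g x = y).

Section Shift.
Variables (f : R -> R) (a alpha : R).

Definition F_ (s : R) : R := f s - alpha * s.

Definition xplus : R := inv_on (fun x => -a <= x <= a) (Derive f) alpha.

Definition Finv (y : R) : R := inv_on (fun x => xplus <= x) F_ y.

Definition phi (x : R) : R := Finv (F_ x).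

Definition delta (x : R) : R := F_ x / (1 - alpha) - phi x.

Definition s_ : R := xplus + delta xplus.

Definition tau (y : R) : R := inv_on (fun x => x <= xplus) (fun x => x + delta x) y.

Definition Sh (x : R) : R :=
  if Rle_dec x s_ then alpha * x + F_ (tau x) else x.
End Shift.

Definition Shift (alpha : R) (f : R -> R) (a : R) : R -> R := Sh f a alpha.

Definition convex_fun (g : R -> R) : Prop :=
  forall x y t, 0 <= t <= 1 ->
    g (t * x + (1 - t) * y) <= t * g x + (1 - t) * g y.

(* Write F = f - alpha x, c = 1 - alpha and g y = y + delta_y.  Since F is convex and equals
   c x far to the right, no slope of F exceeds c; hence g dilates distances on (-oo, x+] and is
   the identity far to the left, so tau inverts g on (-oo, s].  Convexity of F on both branches
   then makes H = F o tau convex and nonincreasing on (-oo, s], and H x >= c x with equality at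
   s turns Sh_alpha(f) into max (x, alpha x + H (min x s)), a maximum of convex functions.  For
   f = Omega the derivative (2/pi) asin (s/2) is nondecreasing and strictly increasing on
   [-2, 2], which yields these hypotheses for every alpha in [0, 1), e.g. alpha = 1 - 2/e. *)

From Stdlib Require Import Reals Lra ClassicalEpsilon.
From Coquelicot Require Import Coquelicot.
Open Scope R_scope.

Lemma inv_on_spec (D : R -> Prop) (g : R -> R) (y : R) :
  (exists x, D x /\ g x = y) -> D (inv_on D g y) /\ g (inv_on D g y) = y.
Proof. exact (epsilon_spec (inhabits 0) (fun x => D x /\ g x = y)). Qed.

Lemma is_derive_continuity_pt (f : R -> R) (x l : R) :
  is_derive f x l -> continuity_pt f x.
Proof.
  intros Hd. apply continuity_pt_filterlim. apply (ex_derive_continuous f x). now exists l.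
Qed.

Lemma MVT_is_derive (f df : R -> R) (u v : R) :
  (forall x, is_derive f x (df x)) -> u < v ->
  exists x, u < x < v /\ f v - f u = df x * (v - u).
Proof.
  intros Hd Huv. destruct (MVT_cor2 f df u v Huv) as [x [Hx Ex]].
  - intros x _. apply is_derive_Reals, Hd.
  - now exists x.
Qed.

Lemma convex_fun_slope (F : R -> R) (x y z : R) :
  convex_fun F -> x < y < z -> (F y - F x) * (z - y) <= (F z - F y) * (y - x).
Proof.
  intros HF Hxyz.
  set (t := (z - y) / (z - x)).
  assert (Ht : 0 <= t <= 1).
  { unfold t; split; [apply Rdiv_le_0_compat | apply (Rdiv_le_1 (z - y) (z - x))]; lra. }
  pose proof (HF x z t Ht) as Hc.
  replace (t * x + (1 - t) * z) with y in Hc by (unfold t; field; lra).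
  replace (F y - F x) with (t * (F y - F x) + (1 - t) * (F y - F x)) by ring.
  replace (z - y) with (t * (z - x)) by (unfold t; field; lra).
  replace (y - x) with ((1 - t) * (z - x)) by (unfold t; field; lra).
  assert (Hzx : 0 < z - x) by lra. nra.
Qed.

Lemma convex_slope_le (F : R -> R) (c M : R) :
  convex_fun F -> (forall z, M <= z -> F z = c * z) ->
  forall u v, u < v -> F v - F u <= c * (v - u).
Proof.
  intros HF Hlin u v Huv.
  set (w := Rmax v M + 1).
  assert (Hw : v < w /\ M <= w).
  { unfold w; pose proof (Rmax_l v M); pose proof (Rmax_r v M); lra. }
  pose proof (convex_fun_slope F u v w HF ltac:(lra)) as S1.
  pose proof (convex_fun_slope F v w (w + 1) HF ltac:(lra)) as S2.
  rewrite (Hlin w), (Hlin (w + 1)) in S2 by lra.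
  rewrite (Hlin w) in S1 by lra.
  apply Rmult_le_reg_r with (w - v); nra.
Qed.

Lemma convex_fun_of_derive (f df : R -> R) :
  (forall x, is_derive f x (df x)) -> (forall u v, u <= v -> df u <= df v) ->
  convex_fun f.
Proof.
  intros Hd Hm.
  assert (Hlt : forall x y t, x < y -> 0 < t < 1 ->
            f (t * x + (1 - t) * y) <= t * f x + (1 - t) * f y).
  { intros x y t Hxy Ht. set (m := t * x + (1 - t) * y).
    destruct (MVT_is_derive f df x m Hd ltac:(unfold m; nra)) as [c1 [Hc1 E1]].
    destruct (MVT_is_derive f df m y Hd ltac:(unfold m; nra)) as [c2 [Hc2 E2]].
    assert (Hc : df c1 <= df c2) by (apply Hm; lra).
    replace (m - x) with ((1 - t) * (y - x)) in E1 by (unfold m; ring).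
    replace (y - m) with (t * (y - x)) in E2 by (unfold m; ring).
    assert (0 <= t * (1 - t) * (y - x)) by (apply Rmult_le_pos; nra).
    nra. }
  intros x y t Ht.
  destruct (Req_dec t 0) as [->|Ht0].
  { replace (0 * x + (1 - 0) * y) with y by ring. lra. }
  destruct (Req_dec t 1) as [->|Ht1].
  { replace (1 * x + (1 - 1) * y) with x by ring. lra. }
  destruct (Rtotal_order x y) as [Hxy|[<-|Hxy]].
  - apply Hlt; lra.
  - replace (t * x + (1 - t) * x) with x by ring. lra.
  - replace (t * x + (1 - t) * y) with ((1 - t) * y + (1 - (1 - t)) * x) by ring.
    pose proof (Hlt y x (1 - t) Hxy ltac:(lra)). lra.
Qed.

Lemma convex_fun_Rmax (g h : R -> R) :
  convex_fun g -> convex_fun h -> convex_fun (fun x => Rmax (g x) (h x)).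
Proof.
  intros Hg Hh x y t Ht.
  pose proof (Hg x y t Ht). pose proof (Hh x y t Ht).
  pose proof (Rmax_l (g x) (h x)). pose proof (Rmax_r (g x) (h x)).
  pose proof (Rmax_l (g y) (h y)). pose proof (Rmax_r (g y) (h y)).
  apply Rmax_lub; nra.
Qed.

Lemma convex_fun_comp_Rmin (h : R -> R) (s : R) :
  (forall x1 x2, x1 <= x2 <= s -> h x2 <= h x1) ->
  (forall x1 x2 t, x1 <= s -> x2 <= s -> 0 <= t <= 1 ->
     h (t * x1 + (1 - t) * x2) <= t * h x1 + (1 - t) * h x2) ->
  convex_fun (fun x => h (Rmin x s)).
Proof.
  intros Hmono Hconv x y t Ht.
  pose proof (Rmin_l x s). pose proof (Rmin_r x s).
  pose proof (Rmin_l y s). pose proof (Rmin_r y s).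
  assert (t * Rmin x s + (1 - t) * Rmin y s <= Rmin (t * x + (1 - t) * y) s)
    by (apply Rmin_glb; nra).
  eapply Rle_trans; [apply Hmono; split; [eassumption | apply Rmin_r] |].
  apply Hconv; auto.
Qed.

Lemma locally_of_ball (x r : R) (P : R -> Prop) :
  0 < r -> (forall y, Rabs (y - x) < r -> P y) -> locally x P.
Proof. intros Hr HP. exists (mkposreal r Hr). intros y Hy. now apply HP. Qed.

Lemma is_derive_of_punctured (f df : R -> R) (x r : R) : 0 < r ->
  (forall y, 0 < Rabs (y - x) < r -> is_derive f y (df y)) ->
  continuity_pt f x -> continuity_pt df x -> is_derive f x (df x).
Proof.
  intros Hr Hder Hf Hdf. apply is_derive_Reals. intros eps Heps.
  destruct (proj1 (continuity_pt_locally df x) Hdf (mkposreal eps Heps)) as [d Hd].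
  assert (Hm : 0 < Rmin d r) by (apply Rmin_glb_lt; [apply cond_pos | lra]).
  exists (mkposreal _ Hm). intros h Hh0 Hh. simpl in Hh.
  pose proof (Rmin_l d r). pose proof (Rmin_r d r).
  assert (Hnear : forall y, Rmin x (x + h) <= y <= Rmax x (x + h) -> Rabs (y - x) <= Rabs h).
  { intros y Hy. unfold Rmin, Rmax in Hy. destruct (Rle_dec x (x + h)); split_Rabs; lra. }
  destruct (MVT_gen f x (x + h) df) as [y [Hy Ey]].
  - intros y Hy. apply Hder. pose proof (Hnear y ltac:(lra)).
    unfold Rmin, Rmax in Hy. destruct (Rle_dec x (x + h)); split_Rabs; lra.
  - intros y Hy. destruct (Req_dec y x) as [->|Hne]; auto.
    apply (is_derive_continuity_pt f y (df y)), Hder.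
    pose proof (Hnear y Hy). split_Rabs; lra.
  - replace ((f (x + h) - f x) / h - df x) with (df y - df x)
      by (rewrite Ey; field; auto).
    apply (Hd y). pose proof (Hnear y Hy). change (Rabs (y - x) < d). lra.
Qed.

Lemma continuity_pt_inverse_on_ray (F G : R -> R) (x0 : R) :
  (forall u v, x0 <= u < v -> F u < F v) ->
  (forall h, F x0 <= h -> x0 <= G h /\ F (G h) = h) ->
  forall h, continuity_pt (fun h => G (Rmax h (F x0))) h.
Proof.
  intros Hincr HG h0. apply continuity_pt_locally. intros [eps Heps]. simpl.
  assert (Hmono : forall u v, x0 <= u <= v -> F u <= F v).
  { intros u v Huv. destruct (Req_dec u v) as [->|]; [lra|]. left; apply Hincr; lra. }
  destruct (HG _ (Rmax_r h0 (F x0))) as [Hz0 Fz0].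
  set (z0 := G (Rmax h0 (F x0))) in *.
  assert (Hup : F z0 < F (z0 + eps)) by (apply Hincr; lra).
  assert (Hdown : exists d, 0 < d /\ (x0 <= z0 - eps -> d <= F z0 - F (z0 - eps))).
  { destruct (Rle_dec x0 (z0 - eps)).
    - exists (F z0 - F (z0 - eps)). pose proof (Hincr (z0 - eps) z0 ltac:(lra)). split; lra.
    - exists 1. split; lra. }
  destruct Hdown as [d [Hd Hd']].
  assert (Hm : 0 < Rmin (F (z0 + eps) - F z0) d) by (apply Rmin_glb_lt; lra).
  exists (mkposreal _ Hm). intros h Hh. change (Rabs (h - h0) < Rmin (F (z0 + eps) - F z0) d) in Hh.
  pose proof (Rmin_l (F (z0 + eps) - F z0) d). pose proof (Rmin_r (F (z0 + eps) - F z0) d).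
  assert (Hmax : Rabs (Rmax h (F x0) - Rmax h0 (F x0)) <= Rabs (h - h0)).
  { unfold Rmax. destruct (Rle_dec h (F x0)), (Rle_dec h0 (F x0)); split_Rabs; lra. }
  destruct (HG _ (Rmax_r h (F x0))) as [Hz Fz].
  set (z := G (Rmax h (F x0))) in *.
  assert (z < z0 + eps).
  { destruct (Rlt_dec z (z0 + eps)) as [|Hn]; auto.
    pose proof (Hmono (z0 + eps) z ltac:(lra)). split_Rabs; lra. }
  assert (z0 - eps < z).
  { destruct (Rlt_dec (z0 - eps) z) as [|Hn]; auto.
    pose proof (Hmono z (z0 - eps) ltac:(lra)). specialize (Hd' ltac:(lra)). split_Rabs; lra. }
  split_Rabs; lra.
Qed.

Section ShiftConvex.
Variables (f : R -> R) (a alpha : R).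

Local Notation F := (F_ f alpha).
Local Notation xp := (xplus f a alpha).
Local Notation G := (Finv f a alpha).
Local Notation c := (1 - alpha).
Local Notation s := (s_ f a alpha).
Local Notation tau := (tau f a alpha).

Hypothesis alpha_range : 0 <= alpha < 1.
Hypothesis F_cont : forall x, continuity_pt F x.
Hypothesis F_convex : convex_fun F.
Hypothesis xplus_range : -a <= xp <= a.
Hypothesis F_decr : forall u v, u < v <= xp -> F v < F u.
Hypothesis F_incr : forall u v, xp <= u < v -> F u < F v.
Hypothesis f_abs : forall x, a <= Rabs x -> f x = Rabs x.

Let g (y : R) : R := y + delta f a alpha y.
Let H (x : R) : R := F (tau x).

Lemma F_right z : a <= z -> F z = c * z.
Proof. intros Hz. unfold F_. rewrite f_abs; rewrite Rabs_right; lra. Qed.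

Lemma F_left y : y <= -a -> F y = - (1 + alpha) * y.
Proof. intros Hy. unfold F_. rewrite f_abs; rewrite Rabs_left1; lra. Qed.

Lemma F_le_left u v : u <= v <= xp -> F v <= F u.
Proof. intros Huv. destruct (Req_dec u v) as [->|]; [lra|]. left; apply F_decr; lra. Qed.

Lemma F_le_right u v : xp <= u <= v -> F u <= F v.
Proof. intros Huv. destruct (Req_dec u v) as [->|]; [lra|]. left; apply F_incr; lra. Qed.

Lemma F_xplus_le x : F xp <= F x.
Proof. destruct (Rle_dec x xp); [apply F_le_left | apply F_le_right]; lra. Qed.

Lemma le_of_F_le_left y y' : y <= xp -> y' <= xp -> F y <= F y' -> y' <= y.
Proof.
  intros Hy Hy' HF. destruct (Rle_dec y' y) as [|Hn]; auto. pose proof (F_decr y y' ltac:(lra)). lra.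
Qed.

Lemma le_of_F_le_right z z' : xp <= z -> xp <= z' -> F z <= F z' -> z <= z'.
Proof.
  intros Hz Hz' HF. destruct (Rle_dec z z') as [|Hn]; auto. pose proof (F_incr z' z ltac:(lra)). lra.
Qed.

Lemma Finv_spec h : F xp <= h -> xp <= G h /\ F (G h) = h.
Proof.
  intros Hh. apply inv_on_spec.
  pose proof (Rmax_l a (h / c)). pose proof (Rmax_r a (h / c)).
  set (z := Rmax a (h / c)) in *.
  assert (Hz : a <= z /\ h <= c * z).
  { split; [lra|]. apply Rmult_le_reg_l with (/ c); [apply Rinv_0_lt_compat; lra|].
    rewrite <- Rmult_assoc, Rinv_l, Rmult_1_l by lra. rewrite Rmult_comm. auto. }
  destruct (IVT_gen F xp z h F_cont) as [x [Hx Fx]].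
  { rewrite (F_right z), Rmin_left, Rmax_right; lra. }
  exists x. rewrite Rmin_left in Hx by lra. split; [lra | exact Fx].
Qed.

Lemma Finv_F z : xp <= z -> G (F z) = z.
Proof.
  intros Hz. destruct (Finv_spec (F z) (F_xplus_le z)) as [HG FG].
  apply Rle_antisym; apply le_of_F_le_right; lra.
Qed.

Lemma Finv_le h1 h2 : F xp <= h1 <= h2 -> G h1 <= G h2.
Proof.
  intros Hh. destruct (Finv_spec h1) as [A1 B1]; [lra|].
  destruct (Finv_spec h2) as [A2 B2]; [lra|].
  apply le_of_F_le_right; lra.
Qed.

Lemma left_preimage h : F xp <= h -> exists y, y <= xp /\ F y = h.
Proof.
  intros Hh.
  pose proof (Rmin_l (- a) (- h / (1 + alpha))). pose proof (Rmin_r (- a) (- h / (1 + alpha))).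
  set (y := Rmin (- a) (- h / (1 + alpha))) in *.
  assert (Hy : y <= - a /\ h <= - (1 + alpha) * y).
  { split; [lra|].
    assert (y * (1 + alpha) <= - h); [|lra].
    apply Rmult_le_reg_r with (/ (1 + alpha)); [apply Rinv_0_lt_compat; lra|].
    rewrite Rmult_assoc, Rinv_r, Rmult_1_r by lra. auto. }
  destruct (IVT_gen F y xp h F_cont) as [x [Hx Fx]].
  { rewrite (F_left y), Rmin_right, Rmax_left; lra. }
  exists x. rewrite Rmax_right in Hx by lra. split; [lra | exact Fx].
Qed.

Lemma g_eq y : g y = y + F y / c - G (F y).
Proof. unfold g, delta, phi. ring. Qed.

Lemma g_left y : y <= - a -> g y = y.
Proof.
  intros Hy. rewrite g_eq.
  set (z := F y / c).
  assert (Fy : F y = c * z) by (unfold z; field; lra).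
  assert (Hz : a <= z).
  { apply Rmult_le_reg_l with c; [lra|]. rewrite <- Fy, F_left by lra. nra. }
  rewrite Fy, <- F_right, Finv_F by lra. ring.
Qed.

Lemma g_dilates y1 y2 : y1 <= y2 <= xp -> y2 - y1 <= g y2 - g y1.
Proof.
  intros Hy. rewrite !g_eq.
  destruct (Finv_spec (F y1) (F_xplus_le y1)) as [A1 B1].
  destruct (Finv_spec (F y2) (F_xplus_le y2)) as [A2 B2].
  assert (Hle : G (F y2) <= G (F y1)).
  { apply Finv_le. split; [apply F_xplus_le | apply F_le_left; lra]. }
  assert (Hslope : F y1 - F y2 <= c * (G (F y1) - G (F y2))).
  { destruct (Req_dec (G (F y2)) (G (F y1))) as [E|].
    - rewrite <- B1, <- B2, E. lra.
    - rewrite <- B1 at 1. rewrite <- B2 at 1.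
      apply (convex_slope_le F c a F_convex F_right). lra. }
  assert (E1 : F y1 = c * (F y1 / c)) by (field; lra).
  assert (E2 : F y2 = c * (F y2 / c)) by (field; lra).
  nra.
Qed.

Lemma g_continuous : continuity g.
Proof.
  intros y.
  apply continuity_pt_ext with (fun y => (y + F y / c) - G (Rmax (F y) (F xp))).
  { intros x. rewrite g_eq, Rmax_left by apply F_xplus_le. ring. }
  apply continuity_pt_minus.
  - apply continuity_pt_plus.
    + apply derivable_continuous_pt, derivable_pt_id.
    + apply continuity_pt_div; auto. apply continuity_pt_const. now intros u v. lra.
  - apply (continuity_pt_comp F (fun h => G (Rmax h (F xp)))); auto.
    apply continuity_pt_inverse_on_ray; auto. apply Finv_spec.
Qed.

Lemma s_eq : s = g xp.
Proof. reflexivity. Qed.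

Lemma tau_spec x : x <= s -> tau x <= xp /\ g (tau x) = x.
Proof.
  intros Hx. apply (inv_on_spec (fun y => y <= xp) g x).
  destruct (Rle_dec x (- a)) as [Hl|Hn].
  - exists x. split; [lra | apply g_left; lra].
  - destruct (IVT_gen g (- a) xp x g_continuous) as [y [Hy Gy]].
    { rewrite g_left, <- s_eq, Rmin_left, Rmax_right; lra. }
    exists y. rewrite Rmax_right in Hy by lra. split; [lra | exact Gy].
Qed.

Lemma le_tau y x : y <= xp -> x <= s -> g y <= x -> y <= tau x.
Proof.
  intros Hy Hx Hgy. destruct (tau_spec x Hx) as [Ht Gt].
  destruct (Rle_dec y (tau x)) as [|Hn]; auto.
  pose proof (g_dilates (tau x) y ltac:(lra)). lra.
Qed.

Lemma c_mul_s : c * s = F xp.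
Proof. rewrite s_eq, g_eq, Finv_F by lra. field. lra. Qed.

Lemma tau_g y : y <= xp -> tau (g y) = y.
Proof.
  intros Hy.
  assert (Hs : g y <= s) by (rewrite s_eq; pose proof (g_dilates y xp ltac:(lra)); lra).
  destruct (tau_spec _ Hs) as [Ht Gt].
  destruct (Rle_dec y (tau (g y))).
  - pose proof (g_dilates y (tau (g y)) ltac:(lra)). lra.
  - pose proof (g_dilates (tau (g y)) y ltac:(lra)). lra.
Qed.

Lemma H_s : H s = F xp.
Proof. unfold H. rewrite s_eq, tau_g by lra. reflexivity. Qed.

Lemma H_ge x : x <= s -> c * x <= H x.
Proof.
  intros Hx. destruct (tau_spec x Hx) as [Ht Gt]. unfold H.
  set (y := tau x) in *. rewrite <- Gt, g_eq.
  destruct (Finv_spec (F y) (F_xplus_le y)) as [HG _].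
  replace (c * (y + F y / c - G (F y))) with (F y + c * (y - G (F y))) by (field; lra).
  assert (c * (y - G (F y)) <= 0) by nra. lra.
Qed.

Lemma H_nonincreasing x1 x2 : x1 <= x2 <= s -> H x2 <= H x1.
Proof.
  intros Hx. destruct (tau_spec x1 ltac:(lra)) as [A1 B1].
  destruct (tau_spec x2 ltac:(lra)) as [A2 B2].
  apply F_le_left. split; auto. apply le_tau; lra.
Qed.

Lemma g_left_level_le y1 y2 yb t : y1 <= xp -> y2 <= xp -> yb <= xp -> 0 <= t <= 1 ->
  F yb = t * F y1 + (1 - t) * F y2 -> g yb <= t * g y1 + (1 - t) * g y2.
Proof.
  intros Hy1 Hy2 Hyb Ht Fyb. rewrite !g_eq, Fyb.
  assert (Hleft : yb <= t * y1 + (1 - t) * y2).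
  { apply le_of_F_le_left; [nra | auto |]. rewrite Fyb. apply F_convex; auto. }
  destruct (Finv_spec (F y1) (F_xplus_le y1)) as [A1 B1].
  destruct (Finv_spec (F y2) (F_xplus_le y2)) as [A2 B2].
  assert (Hh : F xp <= t * F y1 + (1 - t) * F y2).
  { pose proof (F_xplus_le y1). pose proof (F_xplus_le y2). nra. }
  destruct (Finv_spec _ Hh) as [Ab Bb].
  assert (Hright : t * G (F y1) + (1 - t) * G (F y2) <= G (t * F y1 + (1 - t) * F y2)).
  { apply le_of_F_le_right; [nra | auto |]. rewrite Bb.
    rewrite <- B1 at 2. rewrite <- B2 at 2. apply F_convex; auto. }
  replace ((t * F y1 + (1 - t) * F y2) / c) with (t * (F y1 / c) + (1 - t) * (F y2 / c))
    by (field; lra).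
  lra.
Qed.

Lemma H_convex x1 x2 t : x1 <= s -> x2 <= s -> 0 <= t <= 1 ->
  H (t * x1 + (1 - t) * x2) <= t * H x1 + (1 - t) * H x2.
Proof.
  intros Hx1 Hx2 Ht.
  destruct (tau_spec x1 Hx1) as [A1 B1]. destruct (tau_spec x2 Hx2) as [A2 B2].
  assert (Hh : F xp <= t * H x1 + (1 - t) * H x2).
  { unfold H. pose proof (F_xplus_le (tau x1)). pose proof (F_xplus_le (tau x2)). nra. }
  destruct (left_preimage _ Hh) as [yb [Hyb Fyb]].
  rewrite <- Fyb. apply F_le_left. split; [| apply tau_spec; nra].
  apply le_tau; [auto | nra |].
  rewrite <- B1, <- B2. apply g_left_level_le; auto.
Qed.

Lemma Sh_eq x : Sh f a alpha x = Rmax x (alpha * x + H (Rmin x s)).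
Proof.
  unfold Sh. destruct (Rle_dec x s) as [Hx|Hx].
  - rewrite Rmin_left, Rmax_right by (pose proof (H_ge x Hx); unfold H in *; lra). reflexivity.
  - assert (alpha * x + H s <= x) by (rewrite H_s, <- c_mul_s; nra).
    rewrite Rmin_right, Rmax_left by lra. reflexivity.
Qed.

Lemma Sh_convex : convex_fun (Sh f a alpha).
Proof.
  intros x y t Ht. rewrite !Sh_eq.
  apply (convex_fun_Rmax (fun x => x) (fun x => alpha * x + H (Rmin x s))); auto.
  - intros u v r Hr. lra.
  - intros u v r Hr.
    pose proof (convex_fun_comp_Rmin H s H_nonincreasing H_convex u v r Hr). simpl in *. nra.
Qed.

End ShiftConvex.

Lemma asin_ge_1 x : 1 <= x -> asin x = PI / 2.
Proof. intros. unfold asin. destruct (Rle_dec x (-1)); [lra|]. destruct (Rle_dec 1 x); lra. Qed.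

Lemma asin_le_m1 x : x <= -1 -> asin x = - (PI / 2).
Proof. intros. unfold asin. destruct (Rle_dec x (-1)); lra. Qed.

Lemma asin_le x y : x <= y -> asin x <= asin y.
Proof.
  intros Hxy. pose proof (asin_bound x). pose proof (asin_bound y).
  destruct (Rle_dec x (-1)); [rewrite (asin_le_m1 x); lra|].
  destruct (Rle_dec 1 y); [rewrite (asin_ge_1 y); lra|].
  destruct (Rle_dec (asin x) (asin y)) as [|Hn]; auto.
  pose proof (sin_increasing_1 (asin y) (asin x)) as Hs.
  rewrite !sin_asin in Hs; lra.
Qed.

Lemma asin_lt x y : -1 <= x < y -> y <= 1 -> asin x < asin y.
Proof.
  intros Hx Hy. destruct (asin_le x y ltac:(lra)) as [|E]; auto.
  apply (f_equal sin) in E. rewrite !sin_asin in E; lra.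
Qed.

Lemma continuity_pt_asin_1 : continuity_pt asin 1.
Proof.
  apply continuity_pt_locally. intros [eps Heps]. simpl. pose proof PI_RGT_0.
  pose proof (Rmin_l (eps / 2) (PI / 4)). pose proof (Rmin_r (eps / 2) (PI / 4)).
  set (e := Rmin (eps / 2) (PI / 4)) in *.
  assert (He : 0 < e) by (apply Rmin_glb_lt; lra).
  assert (Hs : sin (PI / 2 - e) < 1).
  { rewrite <- sin_PI2. apply sin_increasing_1; lra. }
  apply locally_of_ball with (1 - sin (PI / 2 - e)); [lra|].
  intros y Hy. rewrite asin_1.
  destruct (Rle_dec 1 y). { rewrite asin_ge_1, Rminus_diag, Rabs_R0; lra. }
  assert (Ha : asin (sin (PI / 2 - e)) <= asin y) by (apply asin_le; split_Rabs; lra).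
  rewrite asin_sin in Ha by lra. pose proof (asin_bound y). split_Rabs; lra.
Qed.

Lemma continuity_pt_asin_half_2 : continuity_pt (fun s => asin (s / 2)) 2.
Proof.
  apply (continuity_pt_comp (fun s => s / 2) asin).
  - apply derivable_continuous_pt. reg.
  - replace (2 / 2) with 1 by field. exact continuity_pt_asin_1.
Qed.

Lemma is_derive_asin u : -1 < u < 1 -> is_derive asin u (1 / sqrt (1 - u²)).
Proof.
  intros Hu. apply is_derive_Reals, derive_pt_eq_1 with (derivable_pt_asin u Hu).
  apply derive_pt_asin.
Qed.

Definition Omega_core (s : R) : R := 2 / PI * (s * asin (s / 2) + sqrt (4 - s ^ 2)).
(* [asin] is clamped to [+-PI/2] outside [[-1, 1]], so [dOmega] is the derivative of [Omega]
   on the whole line, equal to [sign s] for [2 <= |s|]. *)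
Definition dOmega (s : R) : R := 2 / PI * asin (s / 2).

Lemma dOmega_le u v : u <= v -> dOmega u <= dOmega v.
Proof.
  intros. unfold dOmega. pose proof PI_RGT_0. apply Rmult_le_compat_l.
  - apply Rlt_le, Rdiv_lt_0_compat; lra.
  - apply asin_le. lra.
Qed.

Lemma dOmega_lt u v : -2 <= u < v -> v <= 2 -> dOmega u < dOmega v.
Proof.
  intros. unfold dOmega. pose proof PI_RGT_0. apply Rmult_lt_compat_l.
  - apply Rdiv_lt_0_compat; lra.
  - apply asin_lt; lra.
Qed.

Lemma dOmega_out x : 2 <= Rabs x -> dOmega x = sign x.
Proof.
  intros Hx. pose proof PI_RGT_0. unfold dOmega. destruct (Rle_dec 0 x).
  - rewrite asin_ge_1, sign_eq_1 by (split_Rabs; lra). field. lra.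
  - rewrite asin_le_m1, sign_eq_m1 by (split_Rabs; lra). field. lra.
Qed.

Lemma continuity_pt_dOmega_2 : continuity_pt dOmega 2.
Proof.
  apply (continuity_pt_mult (fun _ => 2 / PI) (fun s => asin (s / 2))).
  - apply continuity_pt_const. now intros u v.
  - exact continuity_pt_asin_half_2.
Qed.

Lemma Omega_core_out s : Rabs s = 2 -> Omega_core s = 2.
Proof.
  intros Hs. pose proof PI_RGT_0. unfold Omega_core.
  replace (4 - s ^ 2) with 0 by (assert (s = 2 \/ s = -2) as [-> | ->] by (split_Rabs; lra); ring).
  rewrite sqrt_0.
  assert (s = 2 \/ s = -2) as [-> | ->] by (split_Rabs; lra).
  - rewrite asin_ge_1 by lra. field. lra.
  - rewrite asin_le_m1 by lra. field. lra.
Qed.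

Lemma Omega_eq_core s : Rabs s <= 2 -> Omega s = Omega_core s.
Proof. intros. unfold Omega. destruct (Rle_dec (Rabs s) 2); [reflexivity | lra]. Qed.

Lemma Omega_eq_abs s : 2 <= Rabs s -> Omega s = Rabs s.
Proof.
  intros. unfold Omega. destruct (Rle_dec (Rabs s) 2); [|reflexivity].
  assert (Hs : Rabs s = 2) by lra. rewrite Hs. exact (Omega_core_out s Hs).
Qed.

Lemma Omega_opp s : Omega (- s) = Omega s.
Proof.
  unfold Omega. rewrite Rabs_Ropp. destruct (Rle_dec (Rabs s) 2); auto.
  replace (- s / 2) with (- (s / 2)) by field. rewrite asin_opp.
  replace ((- s) ^ 2) with (s ^ 2) by ring. ring.
Qed.

Lemma continuity_pt_Omega_2 : continuity_pt Omega 2.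
Proof.
  assert (Hcore : continuity_pt Omega_core 2).
  { apply (continuity_pt_mult (fun _ => 2 / PI) (fun s => s * asin (s / 2) + sqrt (4 - s ^ 2))).
    - apply continuity_pt_const. now intros u v.
    - apply (continuity_pt_plus (fun s => s * asin (s / 2)) (fun s => sqrt (4 - s ^ 2))).
      + apply (continuity_pt_mult (fun s => s) (fun s => asin (s / 2))).
        * apply derivable_continuous_pt, derivable_pt_id.
        * exact continuity_pt_asin_half_2.
      + apply (continuity_pt_comp (fun s => 4 - s ^ 2) sqrt).
        * apply derivable_continuous_pt. reg.
        * apply continuity_pt_sqrt. lra. }
  apply continuity_pt_locally. intros eps.
  destruct (proj1 (continuity_pt_locally _ _) Hcore eps) as [d Hd].
  pose proof (cond_pos d). pose proof (cond_pos eps).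
  apply locally_of_ball with (Rmin 1 (Rmin d eps)); [repeat apply Rmin_glb_lt; lra|].
  intros y Hy. pose proof (Rmin_l 1 (Rmin d eps)). pose proof (Rmin_r 1 (Rmin d eps)).
  pose proof (Rmin_l d eps). pose proof (Rmin_r d eps).
  rewrite (Omega_eq_core 2), (Omega_core_out 2) by (rewrite Rabs_right; lra).
  destruct (Rle_dec (Rabs y) 2).
  - rewrite Omega_eq_core, <- (Omega_core_out 2) by (auto; rewrite Rabs_right; lra).
    apply Hd. change (Rabs (y - 2) < d). lra.
  - rewrite Omega_eq_abs by lra. split_Rabs; lra.
Qed.

Lemma is_derive_Omega_core x : -2 < x < 2 -> is_derive Omega_core x (dOmega x).
Proof.
  intros Hx. unfold Omega_core, dOmega. pose proof PI_RGT_0.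
  pose proof (is_derive_asin (x / 2) ltac:(lra)) as Da.
  assert (Hr : 0 < 1 - (x / 2)²) by (unfold Rsqr; nra).
  pose proof (sqrt_lt_R0 _ Hr).
  assert (S4 : sqrt (4 + - (x * (x * 1))) = 2 * sqrt (1 - (x / 2)²)).
  { replace (4 + - (x * (x * 1))) with (2 * 2 * (1 - (x / 2)²)) by (unfold Rsqr; field).
    rewrite sqrt_mult, sqrt_square by lra. reflexivity. }
  auto_derive.
  - repeat split; [now exists (1 / sqrt (1 - (x / 2)²)) | nra].
  - replace (Derive (fun y => asin y) (x * / 2)) with (1 / sqrt (1 - (x / 2)²))
      by (symmetry; now apply is_derive_unique).
    rewrite S4. change (x * / 2) with (x / 2). field. lra.
Qed.

Lemma is_derive_Omega_off x : Rabs x <> 2 -> is_derive Omega x (dOmega x).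
Proof.
  intros Hx. destruct (Rlt_dec (Rabs x) 2) as [Hin|Hout].
  - apply is_derive_ext_loc with Omega_core.
    + apply locally_of_ball with (2 - Rabs x); [lra|].
      intros y Hy. symmetry. apply Omega_eq_core. split_Rabs; lra.
    + apply is_derive_Omega_core. split_Rabs; lra.
  - apply is_derive_ext_loc with Rabs.
    + apply locally_of_ball with (Rabs x - 2); [lra|].
      intros y Hy. symmetry. apply Omega_eq_abs. split_Rabs; lra.
    + rewrite dOmega_out by lra. rewrite <- (Rmult_1_r (sign x)).
      apply (is_derive_Rabs (fun y => y)); [apply (@is_derive_id R_AbsRing) | split_Rabs; lra].
Qed.

Lemma is_derive_Omega x : is_derive Omega x (dOmega x).
Proof.
  assert (H2 : is_derive Omega 2 (dOmega 2)).
  { apply is_derive_of_punctured with 1;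
      [lra | | exact continuity_pt_Omega_2 | exact continuity_pt_dOmega_2].
    intros y Hy. apply is_derive_Omega_off. split_Rabs; lra. }
  destruct (Req_dec x 2) as [->|Hx2]; auto.
  destruct (Req_dec x (-2)) as [->|Hxm2].
  - apply is_derive_ext with (fun y => Omega (- y)); [intros; apply Omega_opp|].
    replace (dOmega (-2)) with (-1 * dOmega 2).
    + apply (is_derive_comp Omega (fun y => - y)).
      * replace (- -2) with 2 by ring. exact H2.
      * now auto_derive.
    + unfold dOmega. replace (-2 / 2) with (- (2 / 2)) by field. rewrite asin_opp. ring.
  - apply is_derive_Omega_off. split_Rabs; lra.
Qed.

Lemma is_derive_F_Omega alpha x : is_derive (F_ Omega alpha) x (dOmega x - alpha).
Proof.
  apply (is_derive_minus Omega (fun s => alpha * s)); [apply is_derive_Omega|].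
  auto_derive; auto; ring.
Qed.

Lemma xplus_Omega alpha : 0 <= alpha < 1 ->
  -2 < xplus Omega 2 alpha < 2 /\ dOmega (xplus Omega 2 alpha) = alpha.
Proof.
  intros Ha. pose proof PI_RGT_0.
  assert (DD : forall x, Derive Omega x = dOmega x)
    by (intros; apply is_derive_unique, is_derive_Omega).
  assert (Hspec : -2 <= xplus Omega 2 alpha <= 2 /\ Derive Omega (xplus Omega 2 alpha) = alpha).
  { apply (inv_on_spec (fun x => - 2 <= x <= 2) (Derive Omega) alpha).
    exists (2 * sin (PI * alpha / 2)). pose proof (SIN_bound (PI * alpha / 2)).
    split; [lra|]. rewrite DD. unfold dOmega.
    replace (2 * sin (PI * alpha / 2) / 2) with (sin (PI * alpha / 2)) by field.
    rewrite asin_sin by nra. field. lra. }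
  destruct Hspec as [Hr Hd]. rewrite DD in Hd.
  split; [|exact Hd].
  assert (dOmega 2 = 1) by (rewrite dOmega_out by (rewrite Rabs_right; lra); apply sign_eq_1; lra).
  assert (dOmega (-2) = -1) by (rewrite dOmega_out by (rewrite Rabs_left; lra); apply sign_eq_m1; lra).
  assert (xplus Omega 2 alpha <> 2) by (intros E; rewrite E in Hd; lra).
  assert (xplus Omega 2 alpha <> -2) by (intros E; rewrite E in Hd; lra).
  lra.
Qed.

Lemma Omega_shift_convex alpha : 0 <= alpha < 1 -> convex_fun (Shift alpha Omega 2).
Proof.
  intros Ha. destruct (xplus_Omega alpha Ha) as [Hxp Dxp].
  pose proof (is_derive_F_Omega alpha) as DF.
  apply Sh_convex; auto; [| | lra | | | intros x Hx; apply Omega_eq_abs; lra].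
  - intros x. exact (is_derive_continuity_pt _ _ _ (DF x)).
  - apply (convex_fun_of_derive _ _ DF).
    intros u v Huv. pose proof (dOmega_le u v Huv). lra.
  - intros u v Huv. destruct (MVT_is_derive _ _ u v DF ltac:(lra)) as [y [Hy Ey]].
    assert (dOmega y < alpha).
    { rewrite <- Dxp. apply Rle_lt_trans with (dOmega (Rmax y (-2))).
      - apply dOmega_le, Rmax_l.
      - apply dOmega_lt; [split; [apply Rmax_r | apply Rmax_lub_lt] |]; lra. }
    nra.
  - intros u v Huv. destruct (MVT_is_derive _ _ u v DF ltac:(lra)) as [y [Hy Ey]].
    assert (alpha < dOmega y).
    { rewrite <- Dxp. apply Rlt_le_trans with (dOmega (Rmin y 2)).
      - apply dOmega_lt; [split; [| apply Rmin_glb_lt] | apply Rmin_r]; lra.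
      - apply dOmega_le, Rmin_l. }
    nra.
Qed.

Theorem corollary4p15 (e : nat) (he : (2 <= e)%nat) :
  convex_fun (Shift (1 - 2 / INR e) Omega 2).
Proof.
  apply Omega_shift_convex.
  assert (He : 2 <= INR e) by (apply (le_INR 2) in he; simpl in he; lra).
  assert (0 < 2 / INR e <= 1)
    by (split; [apply Rdiv_lt_0_compat | apply (Rdiv_le_1 2 (INR e))]; lra).
  lra.
Qed.
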